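(* Let $X\ge e^{120}$, $U=\log X$ and $\widetilde W_X=[X,(1+\tfrac{2}{U})X]$. Fix any trajectory $(y_j)_{j\ge0}$ of the map $\mathcal{M}$, and let $N$ be the number of indices $j$ such that $y_j\in\widetilde W_X$ and $y_j$ is composite. Then $N\le 4$.
   Context: Let $\pi(m)$ be the number of primes $\le m$. The integer map $\mathcal{M}$ is defined by: for composite $m$, $\mathcal{M}(m)=m+\pi(m)$ (forward step of length $\pi(m)$); for a prime $p\ge 3$, $\mathcal{M}(p)=p^-$, the largest prime less than $p$ (i.e. the prime steps backward by its preceding prime gap). A trajectory is a sequence with $y_{j+1}=\mathcal{M}(y_j)$ for all $j\ge0$. *)

From mathcomp Require Import all_boot.
From Stdlib Require Import Reals.

Set Implicit Arguments. Unset Strict Implicit. Unset Printing Implicit Defensive.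

Definition primepi (m : nat) : nat := count prime (iota 0 m.+1).

Definition composite (m : nat) : bool := (1 < m) && ~~ prime m.

Definition is_prev_prime (p q : nat) : Prop :=
  prime q /\ (q < p)%N /\ (forall r, (q < r)%N -> (r < p)%N -> ~~ prime r).

Definition Mstep (m m' : nat) : Prop :=
  (composite m /\ m' = (m + primepi m)%N) \/
  (prime m /\ (3 <= m)%N /\ is_prev_prime m m').

Definition trajectory (y : nat -> nat) : Prop := forall j, Mstep (y j) (y j.+1).

Definition in_window (X : R) (n : nat) : Prop :=
  (X <= INR n <= (1 + 2 / ln X) * X)%R.

(* A trajectory never meets a prime: from a prime the map descends strictly
   through primes and is undefined at 2.  Hence every step is y |-> y + pi(y),
   and two visits of the window at least four steps apart differ by at least
   4 pi(X).  Since the window has width 2X / log X, five visits would give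
   2 pi(X) log X <= X, which contradicts Chebyshev's bound
   4^n <= (2n+1) (2n)^pi(2n); the latter holds because 4^n <= (2n+1) C(2n,n)
   and, by Legendre's formula, every prime power dividing C(2n,n) is at most 2n. *)

From mathcomp Require Import all_boot zify.
From Stdlib Require Import Reals Lra.

Set Implicit Arguments.
Unset Strict Implicit.
Unset Printing Implicit Defensive.

(* Reals rebinds [^] in nat_scope to [Nat.pow]; restore [expn]. *)
Local Notation "m ^ n" := (expn m n) : nat_scope.

Lemma central_binS n : n.+1 * 'C(n.*2.+2, n.+1) = (n.*2.+1).*2 * 'C(n.*2, n).
Proof.
have sym : 'C(n.*2.+1, n.+1) = 'C(n.*2.+1, n).
  by rewrite -bin_sub; [congr 'C(_, _); lia | lia].
have diag := mul_bin_diag n.*2.+1 n; rewrite /= sym in diag.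
rewrite binS sym; lia.
Qed.

Lemma central_bin_lower n : 4 ^ n <= n.*2.+1 * 'C(n.*2, n).
Proof.
elim: n => [|n IH]; first by rewrite bin0.
rewrite -(leq_pmul2l (ltn0Sn n)) doubleS mulnCA central_binS expnS.
have := IH; nia.
Qed.

Lemma sum_divn_expn_widen p m K K' : 1 < p -> m < p ^ K.+1 -> K <= K' ->
  \sum_(1 <= k < K'.+1) m %/ p ^ k = \sum_(1 <= k < K.+1) m %/ p ^ k.
Proof.
move=> p_gt1 m_lt le_KK'.
rewrite (big_cat_nat (n := K.+1)) //= [X in _ + X]big1_seq ?addn0 // => k.
rewrite mem_index_iota => /andP[_ /andP[lt_Kk _]].
by apply/divn_small/(leq_trans m_lt); rewrite leq_pexp2l // ltnW.
Qed.

Lemma logn_fact_trunc p m N : prime p -> m <= N ->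
  logn p m`! = \sum_(1 <= k < (trunc_log p N).+1) m %/ p ^ k.
Proof.
move=> p_pr le_mN; have p_gt1 := prime_gt1 p_pr.
have m_lt : m < p ^ (trunc_log p N).+1.
  exact: leq_ltn_trans le_mN (trunc_log_ltn N p_gt1).
set K := maxn m (trunc_log p N).
rewrite logn_fact // -(@sum_divn_expn_widen p m m K) ?leq_maxl //.
  by rewrite (@sum_divn_expn_widen p m (trunc_log p N)) ?leq_maxr.
by apply: leq_trans (ltn_expl m p_gt1) _; apply: leq_pexp2l; lia.
Qed.

Lemma divn_double_le n q : 0 < q -> n.*2 %/ q <= (n %/ q).*2.+1.
Proof.
move=> q_gt0; rewrite -ltnS ltn_divLR //.
have := ltn_pmod n q_gt0; have := divn_eq n q; nia.
Qed.

Lemma logn_central_bin p n : prime p -> logn p 'C(n.*2, n) <= trunc_log p n.*2.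
Proof.
move=> p_pr; set T := trunc_log p n.*2.
have legendre : logn p 'C(n.*2, n) + (logn p n`!).*2 = logn p n.*2`!.
  have := bin_fact (leq_addl n n); rewrite addnK addnn => <-.
  by rewrite !lognM ?muln_gt0 ?fact_gt0 ?bin_gt0 -?addnn ?leq_addl // addnn.
have terms : \sum_(1 <= k < T.+1) n.*2 %/ p ^ k <=
             \sum_(1 <= k < T.+1) (2 * (n %/ p ^ k) + 1).
  by apply: leq_sum => k _; rewrite addn1 mul2n divn_double_le ?expn_gt0 ?prime_gt0.
rewrite big_split /= -big_distrr sum_nat_const_nat subn1 /= in terms.
move: legendre terms.
rewrite (@logn_fact_trunc p n n.*2) ?leq_double -?addnn ?leq_addr //.
rewrite addnn (@logn_fact_trunc p n.*2 n.*2) // -/T muln1; lia.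
Qed.

Lemma leq_pow_primepi m N : 0 < m -> (forall p, prime p -> p ^ logn p m <= N) ->
  m <= N ^ primepi N.
Proof.
move=> m_gt0 part_le.
have primes_prime p : p \in primes m -> prime p by rewrite mem_primes => /andP[].
have prime_le p : p \in primes m -> p <= N.
  move=> pm; apply: leq_trans (part_le p (primes_prime p pm)); rewrite -{1}(expn1 p).
  by apply: leq_pexp2l; [exact/prime_gt0/primes_prime | rewrite logn_gt0].
have N_gt0 : 0 < N by apply: leq_trans (part_le 2 isT); rewrite expn_gt0.
rewrite {1}(prod_prime_decomp m_gt0) prime_decompE big_map /=.
apply: (@leq_trans (\prod_(p <- primes m) N)).
  rewrite big_seq_cond [X in _ <= X]big_seq_cond.
  by apply: leq_prod => p /andP[/primes_prime/part_le].
rewrite big_const_seq count_predT iter_muln_1 leq_pexp2l //.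
rewrite /primepi -size_filter uniq_leq_size ?primes_uniq // => p pm.
by rewrite mem_filter mem_iota ltnS prime_le // primes_prime.
Qed.

Lemma central_bin_upper n : 0 < n -> 'C(n.*2, n) <= n.*2 ^ primepi n.*2.
Proof.
move=> n_gt0; apply: leq_pow_primepi; first by rewrite bin_gt0 -addnn leq_addl.
move=> p p_pr; have p_gt1 := prime_gt1 p_pr.
apply: leq_trans (trunc_logP p_gt1 _); last by rewrite double_gt0.
by apply: leq_pexp2l; [exact: prime_gt0 | exact: logn_central_bin].
Qed.

Lemma chebyshev_central n : 0 < n -> 4 ^ n <= n.*2.+1 * n.*2 ^ primepi n.*2.
Proof.
move=> n_gt0; apply: leq_trans (central_bin_lower n) _.
by rewrite leq_mul2l central_bin_upper ?orbT.
Qed.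

Section RealEstimates.

Local Open Scope R_scope.

Lemma ln_le x y : 0 < x -> x <= y -> ln x <= ln y.
Proof.
move=> x_gt0 /Rle_lt_or_eq_dec [lt_xy | ->]; last exact: Rle_refl.
exact/Rlt_le/ln_increasing.
Qed.

Lemma ln_le_subr1 x : 0 < x -> ln x <= x - 1.
Proof. by move=> x_gt0; have := exp_ineq1_le (ln x); rewrite exp_ln //; lra. Qed.

Lemma ln2_ge : 3 / 5 <= ln 2.
Proof.
have exp3_le : exp 3 <= 27.
  have -> : exp 3 = exp 1 * exp 1 * exp 1 by rewrite -!exp_plus; congr exp; lra.
  have := exp_le_3; have := exp_pos 1; nra.
have : ln (exp 3) < ln (2 ^ 5) by apply: ln_increasing; [exact: exp_pos | simpl; lra].
rewrite ln_exp ln_pow /=; lra.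
Qed.

Lemma exp120_ge : 3721 <= exp 120.
Proof.
have -> : 120 = 60 + 60 by lra.
by rewrite exp_plus; have := exp_ineq1_le 60; nra.
Qed.

Lemma INR_expn (m n : nat) : INR (m ^ n)%nat = INR m ^ n.
Proof. by elim: n => [|n IH]; rewrite ?expnS ?mult_INR ?IH. Qed.

Lemma ln_chebyshev n : (0 < n)%nat ->
  INR n.*2 * ln 2 <= ln (INR n.*2 + 1) + INR (primepi n.*2) * ln (INR n.*2).
Proof.
move=> n_gt0.
have two_n_gt0 : 0 < INR n.*2 by apply/lt_0_INR/ltP; rewrite double_gt0.
have cheb := chebyshev_central n_gt0.
rewrite (_ : 4 = 2 ^ 2)%nat // -expnM mul2n in cheb.
move/leP/le_INR: cheb; rewrite mult_INR !INR_expn (_ : INR 2 = 2) // S_INR => cheb.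
have := ln_le (pow_lt 2 _ Rlt_0_2) cheb.
rewrite ln_mult ?ln_pow //; try lra; exact: pow_lt.
Qed.

Lemma exists_double_floor X : 0 <= X -> exists n : nat, INR n.*2 <= X < INR n.*2 + 2.
Proof.
move=> X_ge0; have [floor_le floor_gt] := base_Int_part (X / 2).
have z_ge0 : (0 <= Int_part (X / 2))%Z.
  suff : (-1 < Int_part (X / 2))%Z by lia.
  by apply: lt_IZR; lra.
exists (Z.to_nat (Int_part (X / 2))).
by rewrite -addnn plus_INR INR_IZR_INZ Znat.Z2Nat.id //; lra.
Qed.

Lemma window_gap X m m' d : 1 < X -> in_window X m -> in_window X m' ->
  (m + d <= m')%nat -> INR d * ln X <= 2 * X.
Proof.
move=> X_gt1 [X_le _] [_ le_X] /leP/le_INR; rewrite plus_INR => gap.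
have lnX_gt0 : 0 < ln X by rewrite -ln_1; apply: ln_increasing; lra.
have -> : 2 * X = (2 * X / ln X) * ln X by field; lra.
apply: Rmult_le_compat_r; first lra.
have : (1 + 2 / ln X) * X = X + 2 * X / ln X by field; lra.
lra.
Qed.

Lemma chebyshev_window X n : exp 120 <= X -> INR n.*2 <= X < INR n.*2 + 2 ->
  2 * X < INR (4 * primepi n.*2) * ln X.
Proof.
move=> X_ge [le_X X_lt]; have X_big := exp120_ge.
set x := INR n.*2 in le_X X_lt; set P := INR (primepi n.*2).
have x_gt0 : 0 < x by lra.
have n_gt0 : (0 < n)%nat.
  by rewrite -double_gt0; apply/ltP/INR_lt; rewrite /= -/x; lra.
have cheb := ln_chebyshev n_gt0; rewrite -/x -/P in cheb.
have four : INR 4 = 4 by simpl; lra.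
apply: Rnot_le_lt; rewrite mult_INR four -/P => short.
have P_ge0 : 0 <= P by apply: pos_INR.
have ln2_lb : x * (3 / 5) <= x * ln 2 by apply: Rmult_le_compat_l; [lra | exact: ln2_ge].
have lnx_le : P * ln x <= P * ln X by apply/Rmult_le_compat_l/ln_le.
have lnx1_le : ln (x + 1) <= ln (X + 1) by apply: ln_le; lra.
have ln_split : ln (X + 1) = ln ((X + 1) / 100) + ln 100.
  by rewrite -ln_mult; [congr ln; field | lra | lra].
have := @ln_le_subr1 ((X + 1) / 100) ltac:(lra).
have := @ln_le_subr1 100 ltac:(lra).
lra.
Qed.

End RealEstimates.

Lemma primepi_mono m m' : m <= m' -> primepi m <= primepi m'.
Proof.
move=> le_mm'; rewrite /primepi -(subnKC le_mm') -addSn iotaD count_cat.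
exact: leq_addr.
Qed.

Section Trajectory.

Variable y : nat -> nat.
Hypothesis traj : trajectory y.

Lemma trajectory_prime_descent j k : prime (y j) ->
  prime (y (j + k)) && (y (j + k) + k <= y j).
Proof.
move=> yj_pr; elim: k => [|k /andP[pr_k le_k]]; first by rewrite !addn0 yj_pr leqnn.
case: (traj (j + k)) => [[comp _] | [_ [_ [pr_next [lt_next _]]]]].
  by move: comp; rewrite /composite pr_k andbF.
by rewrite addnS pr_next /=; lia.
Qed.

Lemma trajectory_composite j : composite (y j).
Proof.
case: (traj j) => [[comp _] // | [yj_pr _]].
by have /andP[_] := trajectory_prime_descent (y j).+1 yj_pr; lia.
Qed.

Lemma trajectory_step j : y j.+1 = y j + primepi (y j).
Proof.
case: (traj j) => [[_ ->] // | [yj_pr _]].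
by have := trajectory_composite j; rewrite /composite yj_pr andbF.
Qed.

Lemma trajectory_growth i j : i <= j -> y i + (j - i) * primepi (y i) <= y j.
Proof.
move=> le_ij; have [k ->] : exists k, j = i + k by exists (j - i); lia.
rewrite addKn; elim: k => [|k IH]; first by rewrite mul0n !addn0.
rewrite addnS trajectory_step.
have : primepi (y i) <= primepi (y (i + k)) by apply: primepi_mono; lia.
lia.
Qed.

End Trajectory.

Lemma uniq_spread (s : seq nat) k : uniq s -> k < size s ->
  exists a b, [/\ a \in s, b \in s & a + k <= b].
Proof.
move=> s_uniq s_big.
have s_inhab : exists j, j \in s.
  by case: s s_uniq s_big => // j s _ _; exists j; rewrite inE eqxx.
case: (ex_minnP s_inhab) => a a_in a_min.
have : ~~ all (fun j => j < a + k) s.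
  apply: contraTN s_big => /allP near; rewrite -leqNgt -(size_iota a k).
  by apply: uniq_leq_size => // j j_in; rewrite mem_iota a_min // near.
by case/allPn => b b_in; rewrite -leqNgt => ab; exists a, b.
Qed.

Theorem lemma3p3 (X : R) (y : nat -> nat) :
  (exp 120 <= X)%R ->
  trajectory y ->
  forall s : seq nat, uniq s ->
    (forall j, j \in s -> composite (y j) /\ in_window X (y j)) ->
    (size s <= 4)%N.
Proof.
move=> X_ge traj s s_uniq s_win; rewrite leqNgt; apply/negP => s_big.
have [a [b [a_in b_in ab]]] := uniq_spread s_uniq s_big.
have [_ win_a] := s_win a a_in; have [_ win_b] := s_win b b_in.
have X_gt1 : (1 < X)%R by have := exp120_ge; lra.
have [n [le_X X_lt]] := exists_double_floor (ltac:(lra) : (0 <= X)%R).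
have gain : y a + 4 * primepi n.*2 <= y b.
  have two_n_le : n.*2 <= y a by apply/leP/INR_le; case: win_a; lra.
  have := trajectory_growth traj (leq_trans (leq_addr 4 a) ab).
  have := primepi_mono two_n_le; nia.
have := window_gap X_gt1 win_a win_b gain.
have := chebyshev_window X_ge (conj le_X X_lt); lra.
Qed.
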